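(* For every term $s$ and every program $P$, $\varphi(\gamma s++\mathsf{ret}::P)=(\gamma s,P)$ (in particular it is defined).
   Context: Terms (de Bruijn): $s::=n\mid st\mid\lambda s$, $n\in\mathbb N$. Commands are $\mathsf{ret}$, $\mathsf{var}\,n$, $\mathsf{lam}$, $\mathsf{app}$; programs are finite lists of commands ($++$ concatenation, $::$ cons, $[]$ empty). Compilation: $\gamma n=[\mathsf{var}\,n]$, $\gamma(st)=\gamma s++\gamma t++[\mathsf{app}]$, $\gamma(\lambda s)=\mathsf{lam}::\gamma s++[\mathsf{ret}]$. The partial function $\varphi$ on programs is $\varphi P:=\varphi_{0,[]}P$, where $\varphi_{0,Q}(\mathsf{ret}::P)=(Q,P)$; $\varphi_{k+1,Q}(\mathsf{ret}::P)=\varphi_{k,Q++[\mathsf{ret}]}P$; $\varphi_{k,Q}(\mathsf{lam}::P)=\varphi_{k+1,Q++[\mathsf{lam}]}P$; $\varphi_{k,Q}(c::P)=\varphi_{k,Q++[c]}P$ if $c=\mathsf{var}\,n$ or $c=\mathsf{app}$; and $\varphi_{k,Q}[]$ is undefined. *)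

From Stdlib Require Import List.
Import ListNotations.

(* de Bruijn terms *)
Inductive term : Type :=
| var : nat -> term
| app : term -> term -> term
| lam : term -> term.

Inductive com : Type :=
| retC : com
| varC : nat -> com
| lamC : com
| appC : com.

Definition prog := list com.

Fixpoint gamma (s : term) : prog :=
  match s with
  | var n => [varC n]
  | app s t => gamma s ++ gamma t ++ [appC]
  | lam s => lamC :: gamma s ++ [retC]
  end.

(* phi_{k,Q} P ; None = undefined *)
Fixpoint phi_aux (k : nat) (Q : prog) (P : prog) : option (prog * prog) :=
  match P with
  | [] => None
  | retC :: P' =>
      match k with
      | 0 => Some (Q, P')
      | S k' => phi_aux k' (Q ++ [retC]) P'
      end
  | lamC :: P' => phi_aux (S k) (Q ++ [lamC]) P'
  | c :: P' => phi_aux k (Q ++ [c]) P'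
  end.

Definition phi (P : prog) : option (prog * prog) := phi_aux 0 [] P.

From Stdlib Require Import List.
Import ListNotations.

Lemma phi_aux_gamma_app (s : term) (k : nat) (Q R : prog) :
  phi_aux k Q (gamma s ++ R) = phi_aux k (Q ++ gamma s) R.
Proof.
  revert k Q R.
  induction s as [n | s IHs t IHt | s IHs]; intros k Q R; simpl.
  - reflexivity.
  - rewrite <- !app_assoc, IHs, IHt, !app_assoc.
    reflexivity.
  - rewrite <- app_assoc; simpl.
    rewrite IHs; simpl.
    rewrite <- !app_assoc.
    reflexivity.
Qed.

Theorem lemma9 (s : term) (P : prog) :
  phi (gamma s ++ retC :: P) = Some (gamma s, P).
Proof.
  unfold phi.
  rewrite phi_aux_gamma_app.
  reflexivity.
Qed.
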